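(* A map $\operatorname{z}\colon\operatorname{Conv}(\mathbb{R}^n;\mathbb{R})\to\mathbb{R}^n$ is a continuous, dually translation covariant, vertically translation invariant valuation that is homogeneous of degree $0$ if and only if there exists $t\in\mathbb{R}^n$ such that $\operatorname{z}(v)=t$ for every $v\in\operatorname{Conv}(\mathbb{R}^n;\mathbb{R})$. For $n\geq2$, such a $\operatorname{z}$ is in addition rotation equivariant if and only if $\operatorname{z}\equiv o$. For $n=1$, the same holds with rotation equivariance replaced by reflection equivariance ($\operatorname{z}(v(-\,\cdot))=-\operatorname{z}(v)$).
   Context: $\operatorname{Conv}(\mathbb{R}^n;\mathbb{R})$: convex functions $\mathbb{R}^n\to\mathbb{R}$ with the topology of pointwise convergence. Valuation: $\operatorname{z}(v\vee w)+\operatorname{z}(v\wedge w)=\operatorname{z}(v)+\operatorname{z}(w)$ whenever $v,w,v\vee w,v\wedge w$ are in the space. Dually translation covariant: there is $\operatorname{z}^0$ with $\operatorname{z}(v+\langle x,\cdot\rangle)=\operatorname{z}(v)+\operatorname{z}^0(v)x$. Vertically translation invariant: $\operatorname{z}(v+c)=\operatorname{z}(v)$ for $c\in\mathbb{R}$. Homogeneous of degree $s$: $\operatorname{z}(\lambda v)=\lambda^s\operatorname{z}(v)$ for $\lambda>0$. Rotation equivariant: $\operatorname{z}(v\circ\vartheta^{-1})=\vartheta\operatorname{z}(v)$ for $\vartheta\in\operatorname{SO}(n)$. $o$ denotes the origin. *)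

From HB Require Import structures.
From mathcomp Require Import all_boot all_order all_algebra.
From mathcomp Require Import all_classical all_reals all_analysis.
Set Implicit Arguments. Unset Strict Implicit. Unset Printing Implicit Defensive.
Import Order.TTheory GRing.Theory Num.Theory.
Import numFieldNormedType.Exports.
Local Open Scope ring_scope.
Local Open Scope classical_set_scope.

Definition convex_fun (R : realType) (n : nat) (v : 'rV[R]_n -> R) : Prop :=
  forall (x y : 'rV[R]_n) (t : R), 0 <= t <= 1 ->
    v ((1 - t) *: x + t *: y) <= (1 - t) * v x + t * v y.

Definition Conv (R : realType) (n : nat) : set {ptws 'rV[R]_n -> R} :=
  [set v | convex_fun v].

Definition inner (R : realType) (n : nat) (x y : 'rV[R]_n) : R :=
  \sum_(i < n) x ord0 i * y ord0 i.

Definition fmax (R : realType) (n : nat) (v w : 'rV[R]_n -> R) :=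
  fun x => Num.max (v x) (w x).
Definition fmin (R : realType) (n : nat) (v w : 'rV[R]_n -> R) :=
  fun x => Num.min (v x) (w x).

Definition is_valuation (R : realType) (n : nat)
    (z : ({ptws 'rV[R]_n -> R}) -> 'rV[R]_n) : Prop :=
  forall v w : 'rV[R]_n -> R,
    convex_fun v -> convex_fun w ->
    convex_fun (fmax v w) -> convex_fun (fmin v w) ->
    z (fmax v w) + z (fmin v w) = z v + z w.

Definition is_continuous_on_Conv (R : realType) (n : nat)
    (z : ({ptws 'rV[R]_n -> R}) -> 'rV[R]_n) : Prop :=
  {within @Conv R n, continuous z}.

Definition dually_translation_covariant (R : realType) (n : nat)
    (z : ({ptws 'rV[R]_n -> R}) -> 'rV[R]_n) : Prop :=
  exists z0 : ('rV[R]_n -> R) -> R,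
    forall (v : 'rV[R]_n -> R) (x : 'rV[R]_n), convex_fun v ->
      z (fun y => v y + inner x y) = z v + z0 v *: x.

Definition vertically_translation_invariant (R : realType) (n : nat)
    (z : ({ptws 'rV[R]_n -> R}) -> 'rV[R]_n) : Prop :=
  forall (v : 'rV[R]_n -> R) (c : R), convex_fun v ->
    z (fun y => v y + c) = z v.

Definition homogeneous0 (R : realType) (n : nat)
    (z : ({ptws 'rV[R]_n -> R}) -> 'rV[R]_n) : Prop :=
  forall (v : 'rV[R]_n -> R) (lambda : R), convex_fun v -> 0 < lambda ->
    z (fun y => lambda * v y) = z v.

(* SO(n): orthogonal matrices of determinant 1.  A matrix th acts on a
   (row) vector x as th x := x *m th^T. *)
Definition is_rotation (R : realType) (n : nat) (th : 'M[R]_n) : Prop :=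
  th *m th^T = 1%:M /\ \det th = 1.

Definition rotation_equivariant (R : realType) (n : nat)
    (z : ({ptws 'rV[R]_n -> R}) -> 'rV[R]_n) : Prop :=
  forall (v : 'rV[R]_n -> R) (th : 'M[R]_n), convex_fun v -> is_rotation th ->
    (* v o th^{-1} : x |-> v (th^{-1} x) = v (x *m (th^{-1})^T) = v (x *m th) *)
    z (fun x => v (x *m th)) = z v *m th^T.

Definition reflection_equivariant (R : realType) (n : nat)
    (z : ({ptws 'rV[R]_n -> R}) -> 'rV[R]_n) : Prop :=
  forall v : 'rV[R]_n -> R, convex_fun v ->
    z (fun x => v (- x)) = - z v.

From HB Require Import structures.
From mathcomp Require Import all_boot all_order all_algebra.
From mathcomp Require Import all_classical all_reals all_analysis.
From mathcomp Require Import ring lra.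
Import Order.TTheory GRing.Theory Num.Theory.
Import numFieldNormedType.Exports.
Local Open Scope ring_scope.
Local Open Scope classical_set_scope.

(* Homogeneity of degree 0 makes z constant along the ray (l v)_{l > 0}; as
   l -> 0+ these functions converge pointwise to 0 inside Conv(R^n;R), so by
   continuity z v = z 0 for every v.  Rotation (resp. reflection) equivariance then
   forces the constant t to be fixed by every rotation (resp. by -1); for
   n >= 2 the rotation diag(.., -1, .., -1, ..) flipping two coordinates i, j
   shows t_i = -t_i, so t = 0. *)

Section ConvexFunctions.
Context {R : realType} {n : nat}.
Implicit Types (v : 'rV[R]_n -> R) (x : 'rV[R]_n).

Lemma convex_fun_cst (c : R) : convex_fun (fun _ : 'rV[R]_n => c).
Proof. by move=> x y t _; rewrite -mulrDl subrK mul1r. Qed.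

Lemma convex_fun_addr v (c : R) : convex_fun v -> convex_fun (fun y => v y + c).
Proof. by move=> cv a b t t01; have := cv a b t t01; lra. Qed.

Lemma inner_combination x a b (t : R) :
  inner x ((1 - t) *: a + t *: b) = (1 - t) * inner x a + t * inner x b.
Proof.
rewrite /inner !mulr_sumr -big_split /=; apply: eq_bigr => i _.
by rewrite !mxE; ring.
Qed.

Lemma convex_fun_add_inner v x :
  convex_fun v -> convex_fun (fun y => v y + inner x y).
Proof. by move=> cv a b t t01; rewrite inner_combination; have := cv a b t t01; lra. Qed.

Lemma convex_fun_scale v (l : R) : convex_fun v -> 0 <= l -> convex_fun (fun y => l * v y).
Proof.
move=> cv l0 x y t t01.
by rewrite mulrCA (mulrCA t) -mulrDr ler_wpM2l // cv.
Qed.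

Lemma convex_fun_comp_mx v (A : 'M[R]_n) : convex_fun v -> convex_fun (fun x => v (x *m A)).
Proof. by move=> cv x y t t01; rewrite mulmxDl -!scalemxAl cv. Qed.

Lemma convex_fun_comp_opp v : convex_fun v -> convex_fun (fun x => v (- x)).
Proof. by move=> cv x y t t01; rewrite opprD -!scalerN cv. Qed.

End ConvexFunctions.

Section ConstantMaps.
Context {R : realType} {n : nat}.
Implicit Types (z : {ptws 'rV[R]_n -> R} -> 'rV[R]_n) (v : 'rV[R]_n -> R).

Lemma scale_cvg0_within_Conv {v} : convex_fun v ->
  (fun l : R => (fun y => l * v y) : {ptws 'rV[R]_n -> R}) @ 0^'+ -->
  ((fun _ => 0) : subspace (@Conv R n)).
Proof.
move=> cv W; rewrite /nbhs /= -(@nbhs_subspace_in _ (@Conv R n)); last exact: convex_fun_cst.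
have cvg_ptws : (fun l : R => (fun y => l * v y) : {ptws 'rV[R]_n -> R}) @ 0^'+ -->
    ((fun _ => 0) : {ptws 'rV[R]_n -> R}).
  apply/pointwise_cvgP => y; rewrite -[X in _ --> X](mul0r (v y)).
  by apply: cvgM; [exact: cvg_at_right_filter | exact: cvg_cst].
move=> /cvg_ptws; rewrite /= nbhs_simpl => near_W.
have {}near_W : \forall l \near 0^'+, Conv (fun y => l * v y) -> W (fun y => l * v y)
  := near_W.
apply: filterS2 near_W (@nbhs_right_gt R 0) => l Wl l0; apply: Wl.
exact: convex_fun_scale cv (ltW l0).
Qed.

Lemma continuous_homogeneous0_const {z v} :
  is_continuous_on_Conv z -> homogeneous0 z -> convex_fun v ->
  z v = z (fun _ => 0).
Proof.
move=> zc zh cv.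
pose zray (l : R) := from_subspace (@Conv R n) z (fun y => l * v y).
have cvg_zray : zray @ 0^'+ --> z (fun _ => 0).
  exact: cvg_comp _ _ (scale_cvg0_within_Conv cv) (zc (fun _ => 0)).
have zray_near : zray @ 0^'+ --> z v.
  by apply: cvg_near_cst; near=> l; apply: zh => //; near: l; exact: nbhs_right_gt.
exact: cvg_unique zray_near cvg_zray.
Unshelve. all: by end_near.
Qed.

Lemma const_continuous_on_Conv z (t : 'rV[R]_n) :
  (forall v, convex_fun v -> z v = t) -> is_continuous_on_Conv z.
Proof.
move=> zt v; apply: cvg_near_cst; rewrite /nbhs /= /nbhs_subspace.
case: ifPn => [/set_mem cv|_]; last by move=> w /= ->.
apply: (@filterE _ (nbhs (v : {ptws 'rV[R]_n -> R}))) => w cw.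
by rewrite /from_subspace !zt.
Qed.

Lemma hom0_valuation_const z :
  (is_continuous_on_Conv z /\ dually_translation_covariant z /\
   vertically_translation_invariant z /\ is_valuation z /\ homogeneous0 z)
  <-> exists t, forall v, convex_fun v -> z v = t.
Proof.
split=> [[zc [_ [_ [_ zh]]]]|[t zt]].
  by exists (z (fun _ => 0)) => v cv; exact: (continuous_homogeneous0_const zc zh cv).
split; first exact: const_continuous_on_Conv zt.
split.
  exists (fun _ => 0) => v x cv.
  by rewrite scale0r addr0 !zt //; exact: convex_fun_add_inner.
split; first by move=> v c cv; rewrite !zt //; exact: convex_fun_addr.
split; first by move=> v w cv cw cM cm; rewrite !zt.
by move=> v l cv l0; rewrite !zt //; exact: convex_fun_scale (ltW l0).
Qed.

End ConstantMaps.

Lemma oppr_fixed_eq0 (K : numFieldType) (V : lmodType K) (x : V) : - x = x -> x = 0.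
Proof.
move=> Nx; have : x *+ 2 == 0 by rewrite mulr2n -{1}Nx addNr.
by rewrite -scaler_nat scaler_eq0 pnatr_eq0 => /eqP.
Qed.

Section Rotations.
Context {R : realType} {n : nat}.

Definition flip2 (i j : 'I_n) : 'M[R]_n :=
  diag_mx (\row_k (if (k == i) || (k == j) then -1 else 1)).

Lemma is_rotation_flip2 {i j : 'I_n} : i != j -> is_rotation (flip2 i j).
Proof.
move=> ij; split.
  rewrite tr_diag_mx mulmx_diag -diag_const_mx; congr diag_mx.
  by apply/rowP => k; rewrite !mxE; case: ifP => _; rewrite ?mulrNN mulr1.
rewrite det_diag (bigD1 i) //= (bigD1 j) 1?eq_sym //= big1 ?mxE ?eqxx ?orbT.
  by rewrite mulr1 mulrNN mulr1.
by move=> k /andP [ki kj]; rewrite mxE (negbTE ki) (negbTE kj).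
Qed.

Lemma rotation_fixed_eq0 (t : 'rV[R]_n) : (2 <= n)%N ->
  (forall th, is_rotation th -> t *m th^T = t) -> t = 0.
Proof.
move=> n2 t_fixed; apply/rowP => i; rewrite mxE.
have [j ji] : exists j : 'I_n, j != i.
  case: (eqVneq (val i) 0%N) => [i0|i0]; last by exists (Ordinal (ltnW n2)); rewrite eq_sym.
  by exists (Ordinal n2); apply/eqP => /(congr1 val) /=; rewrite i0.
have ij : i != j by rewrite eq_sym.
have := t_fixed _ (is_rotation_flip2 ij).
rewrite tr_diag_mx mul_mx_diag => /rowP /(_ i); rewrite !mxE eqxx /= mulrN1.
exact: oppr_fixed_eq0.
Qed.

End Rotations.

Theorem theorem5p4 (R : realType) (n : nat)
    (z : ({ptws 'rV[R]_n -> R}) -> 'rV[R]_n) :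
  ((is_continuous_on_Conv z /\ dually_translation_covariant z /\
    vertically_translation_invariant z /\ is_valuation z /\ homogeneous0 z)
   <-> exists t : 'rV[R]_n, forall v, convex_fun v -> z v = t)
  /\
  ((2 <= n)%N ->
   (is_continuous_on_Conv z /\ dually_translation_covariant z /\
    vertically_translation_invariant z /\ is_valuation z /\ homogeneous0 z /\
    rotation_equivariant z)
   <-> (forall v, convex_fun v -> z v = 0))
  /\
  (n = 1%N ->
   (is_continuous_on_Conv z /\ dually_translation_covariant z /\
    vertically_translation_invariant z /\ is_valuation z /\ homogeneous0 z /\
    reflection_equivariant z)
   <-> (forall v, convex_fun v -> z v = 0)).
Proof.
have [_ props_of_const] := hom0_valuation_const z.
split; first exact: hom0_valuation_const.
split=> [n2|_]; split.
- move=> [zc [_ [_ [_ [zh zrot]]]]] v cv.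
  rewrite (continuous_homogeneous0_const zc zh cv).
  apply: rotation_fixed_eq0 n2 _ => th th_rot.
  by rewrite -zrot //; exact: convex_fun_cst.
- move=> z0; have [? [? [? [? ?]]]] := props_of_const (ex_intro _ 0 z0).
  do 5 split => //.
  by move=> v th cv _; rewrite !z0 ?mul0mx //; exact: convex_fun_comp_mx.
- move=> [zc [_ [_ [_ [zh zrefl]]]]] v cv.
  rewrite (continuous_homogeneous0_const zc zh cv).
  by apply: oppr_fixed_eq0; rewrite -zrefl //; exact: convex_fun_cst.
- move=> z0; have [? [? [? [? ?]]]] := props_of_const (ex_intro _ 0 z0).
  do 5 split => //.
  by move=> v cv; rewrite !z0 ?oppr0 //; exact: convex_fun_comp_opp.
Qed.
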